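(* Let $G_0$ be a fixed $n\times l$ binary matrix, $G_1$ a fixed $n\times k$ binary matrix, $\mathbf m\in\{0,1\}^k$ fixed, and let $t_0=\lfloor (d_0-1)/2\rfloor$. For every $u$ with $1\le u\le d_0+t_0$, $$P(E=0\mid U=u)=\frac12\cdot\frac{\sum_{w=d_0}^{u}B_{0,w}\binom{n-w}{u-w}}{\binom{n}{u}}.$$
   Context: All arithmetic is over $\mathrm{GF}(2)$. $\mathcal C_0^{\perp}=\{\mathbf x\in\{0,1\}^n: G_0^T\mathbf x=\mathbf 0\}$; $B_{0,w}$ is the number of vectors of Hamming weight $w$ in $\mathcal C_0^\perp$, and $d_0$ is the minimum Hamming weight of a nonzero vector of $\mathcal C_0^\perp$ (empty sums are $0$). Defect model: each of the $n$ memory cells is independently defective with probability $\beta\in(0,1)$; a defective cell is stuck at $0$ or at $1$, each with probability $1/2$, independently. Let $\mathcal U$ be the set of defect positions, $U=|\mathcal U|$, $\mathbf s^{\mathcal U}$ the vector of stuck-at values; conditionally on $U=u$, $\mathcal U$ is a uniform random $u$-subset and $\mathbf s^{\mathcal U}$ is uniform on $\{0,1\}^u$. For a matrix $M$ (resp. vector $\mathbf v$) with rows indexed by $\{1,\dots,n\}$, $M^{\mathcal U}$ (resp. $\mathbf v^{\mathcal U}$) denotes the rows indexed by $\mathcal U$. Encoding: with $\mathbf b^{\mathcal U}=(G_1\mathbf m)^{\mathcal U}+\mathbf s^{\mathcal U}$, look for $\mathbf d\in\{0,1\}^l$ with $G_0^{\mathcal U}\mathbf d=\mathbf b^{\mathcal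 U}$; $E=1$ if such $\mathbf d$ exists and $E=0$ (encoding failure) otherwise. *)

From HB Require Import structures.
From mathcomp Require Import all_boot all_order all_algebra.
Set Implicit Arguments. Unset Strict Implicit. Unset Printing Implicit Defensive.
Import Order.TTheory GRing.Theory Num.Theory.
Local Open Scope ring_scope.

Definition wt (n : nat) (x : 'cV['F_2]_n) : nat := #|[set i | x i ord0 != 0]|.

Definition dual (n l : nat) (G0 : 'M['F_2]_(n, l)) : {set 'cV['F_2]_n} :=
  [set x : 'cV['F_2]_n | G0^T *m x == 0].

Definition Bw (n l : nat) (G0 : 'M['F_2]_(n, l)) (w : nat) : nat :=
  #|[set x in dual G0 | (wt x == w)%N]|.

Definition is_min_dist (n l : nat) (G0 : 'M['F_2]_(n, l)) (d : nat) : Prop :=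
  (exists2 x, x \in dual G0 & (x != 0) && (wt x == d)%N) /\
  (forall x, x \in dual G0 -> x != 0 -> (d <= wt x)%N).

(* Encoding success for defect set S and stuck-at values s (s is the
   vector s^U, stored as a length-n vector vanishing outside S):
   there is d with G0^S d = (G1 m)^S + s^S. *)
Definition encodable (n l k : nat) (G0 : 'M['F_2]_(n, l)) (G1 : 'M['F_2]_(n, k))
  (m : 'cV['F_2]_k) (S : {set 'I_n}) (s : 'cV['F_2]_n) : bool :=
  [exists d : 'cV['F_2]_l, [forall i in S, (G0 *m d) i ord0 == (G1 *m m) i ord0 + s i ord0]].

(* stuck-at patterns on S: vectors in {0,1}^S, represented as length-n
   vectors that are zero outside S (a bijection with {0,1}^S). *)
Definition patterns (n : nat) (S : {set 'I_n}) : {set 'cV['F_2]_n} :=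
  [set s : 'cV['F_2]_n | [forall i in ~: S, s i ord0 == 0]].

(* P(E = 0 | U = u): given U = u, the defect set is a uniform u-subset and
   the stuck-at vector is uniform on {0,1}^u. *)
Definition fail_prob (n l k : nat) (G0 : 'M['F_2]_(n, l)) (G1 : 'M['F_2]_(n, k))
  (m : 'cV['F_2]_k) (u : nat) : rat :=
  (\sum_(S : {set 'I_n} | (#|S| == u)%N)
     (#|[set s in patterns S | ~~ encodable G0 G1 m S s]|)%:R / (2 ^ u)%:R)
  / ('C(n, u))%:R.

(* Given U = u, the stuck-at word s is uniform on the 2^u patterns, and encoding
   fails exactly when the restriction of G1 m + s to the defect set S misses the
   column space of G0^S. That column space has 2^u / |W_S| elements, where W_S is
   the set of codewords of C_0^perp supported in S (rank-nullity for the
   transpose), so the failure probability given S is 1 - 1/|W_S|. As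
   |S| <= d0 + t0, for two distinct nonzero words x, y of W_S one of x, y, x + y
   would have weight < d0, hence |W_S| is 1 or 2 and the failure probability is |W_S \ 0| / 2.
   Averaging over the u-subsets S and counting, for each nonzero codeword x of
   weight w, the C(n - w, u - w) sets S containing its support gives the
   formula. *)

From HB Require Import structures.
From mathcomp Require Import all_boot all_order all_algebra zify.
Import Order.TTheory GRing.Theory Num.Theory.
Local Open Scope ring_scope.
Set Implicit Arguments. Unset Strict Implicit.

Section FinFieldSpaces.
Variable F : finFieldType.

Lemma card_submx m n (M : 'M[F]_(m, n)) :
  #|[set y : 'rV_n | (y <= M)%MS]| = (#|F| ^ \rank M)%N.
Proof.
have -> : [set y : 'rV_n | (y <= M)%MS] = [set x *m row_base M | x : 'rV_(\rank M)].
  apply/setP=> y; rewrite inE; apply/idP/imsetP.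
    by rewrite -(eq_row_base M) => /submxP[D ->]; exists D.
  by move=> [x _ ->]; rewrite -(eq_row_base M) submxMl.
rewrite card_imset; last exact/row_free_inj/row_base_free.
by rewrite card_mx mul1n.
Qed.

Definition colspan m n (A : 'M[F]_(m, n)) : {set 'cV[F]_m} := [set A *m d | d : 'cV_n].

Lemma card_colspan m n (A : 'M[F]_(m, n)) : #|colspan A| = (#|F| ^ \rank A)%N.
Proof.
rewrite -mxrank_tr -card_submx -(card_imset _ (@trmx_inj _ _ _)).
apply: eq_card => v; apply/imsetP/imsetP => [[d _ ->]|[w]].
  by exists (A *m d)^T; rewrite ?trmxK // inE trmx_mul submxMl.
rewrite inE => /submxP[D ->] ->; exists D^T => //.
by rewrite trmx_mul trmxK.
Qed.

Lemma card_mulmx_eq0 m n (A : 'M[F]_(m, n)) :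
  #|[set x : 'cV_n | A *m x == 0]| = (#|F| ^ (n - \rank A))%N.
Proof.
rewrite -mxrank_tr -mxrank_ker -card_submx -(card_imset _ (@trmx_inj _ _ _)).
apply: eq_card => y; rewrite !inE sub_kermx; apply/imsetP/idP.
  by move=> [x]; rewrite inE => /eqP Ax ->; rewrite -trmx_mul Ax trmx0.
move=> /eqP yA; exists y^T; last by rewrite trmxK.
by rewrite inE -[A]trmxK -trmx_mul yA trmx0.
Qed.

End FinFieldSpaces.

Lemma big_nat_pred1 (R : Type) (idx : R) (op : Monoid.law idx) (lo hi a : nat) (F : nat -> R) :
  \big[op/idx]_(lo <= i < hi | i == a) F i = if (lo <= a < hi)%N then F a else idx.
Proof.
case: ifP => a_in; last first.
  by rewrite big1_seq // => i /andP[/eqP-> ]; rewrite mem_index_iota a_in.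
rewrite -big_filter (@filter_pred1_uniq _ _ a) ?iota_uniq ?mem_index_iota //.
by rewrite big_seq1.
Qed.

Lemma card_setIdE (T : finType) (P p : pred T) :
  #|[set x | P x && p x]| = (\sum_(x | P x) p x)%N.
Proof.
rewrite -sum1_card (eq_bigl (fun x => P x && p x)) => [|x]; last by rewrite inE.
by rewrite big_mkcondr /=; apply: eq_bigr => x _; case: (p x).
Qed.

Lemma card_draws_supset (T : finType) (A : {set T}) (u : nat) : (u <= #|T|)%N ->
  #|[set B : {set T} | (#|B| == u) && (A \subset B)]| =
  if (#|A| <= u)%N then 'C(#|T| - #|A|, u - #|A|) else 0%N.
Proof.
move=> u_le; have cardAC := cardsC A.
case: leqP => A_le; last first.
  apply: eq_card0 => B; rewrite !inE; apply/negP => /andP[/eqP B_u /subset_leq_card].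
  by rewrite B_u leqNgt A_le.
rewrite -bin_sub ?leq_sub2r // (_ : _ - _ - _ = #|T| - u)%N; last by lia.
rewrite (_ : #|T| - #|A| = #|~: A|)%N; last by lia.
rewrite -cards_draws -(card_imset _ (@setC_inj _)); apply: eq_card => B; rewrite inE.
apply/imsetP/andP => [[C] /[!inE] /andP[/eqP C_u AC] ->|[BA /eqP B_c]].
  by split; [rewrite setCS | apply/eqP; have := cardsC C; lia].
exists (~: B); last by rewrite setCK.
by rewrite inE -setCS setCK BA andbT; apply/eqP; have := cardsC B; lia.
Qed.

Section Supports.
Variable n : nat.
Implicit Types (S : {set 'I_n}) (x s v : 'cV['F_2]_n).

Definition supp x : {set 'I_n} := [set i | x i ord0 != 0].

Lemma patterns_supp S s : (s \in patterns S) = (supp s \subset S).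
Proof.
rewrite inE; apply/forallP/subsetP => [sS i|sS i].
  by rewrite inE; apply: contraR => iS; have /implyP := sS i; apply; rewrite inE.
by apply/implyP; rewrite inE; apply: contraR => si; apply: sS; rewrite inE.
Qed.

Lemma card_patterns S : #|patterns S| = (2 ^ #|S|)%N.
Proof.
pose f v : {ffun 'I_n -> 'F_2} := [ffun i => v i ord0].
have f_inj : injective f.
  move=> v w /ffunP fvw; apply/matrixP=> i j; rewrite (ord1 j).
  by have := fvw i; rewrite !ffunE.
have -> : (2 ^ #|S| = #|pffun_on (0%R : 'F_2) S predT|)%N.
  by rewrite card_pffun_on card_Fp.
rewrite -(card_imset _ f_inj).
apply: eq_card => h; apply/imsetP/pffun_onP => [[v]|[/subsetP hS _]].
  rewrite patterns_supp => /subsetP vS ->; split=> //.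
  by apply/subsetP => i; rewrite inE ffunE => vi; apply: vS; rewrite inE.
exists (\col_i h i); last by apply/ffunP=> i; rewrite !ffunE mxE.
by rewrite patterns_supp; apply/subsetP => i; rewrite inE mxE => hi; apply: hS.
Qed.

Definition restrict_mx S : 'M['F_2]_n := diag_mx (\row_j (j \in S)%:R).

Lemma restrict_mxE S p (A : 'M_(n, p)) i j :
  (restrict_mx S *m A) i j = if i \in S then A i j else 0.
Proof. by rewrite mul_diag_mx !mxE; case: (i \in S); rewrite ?mul1r ?mul0r. Qed.

Lemma tr_restrict_mx S : (restrict_mx S)^T = restrict_mx S.
Proof. exact: tr_diag_mx. Qed.

Lemma restrict_mx_patterns S v : restrict_mx S *m v \in patterns S.
Proof.
rewrite patterns_supp; apply/subsetP => i.
by rewrite inE restrict_mxE; case: (i \in S); rewrite ?eqxx.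
Qed.

Lemma restrict_mx_id S s : s \in patterns S -> restrict_mx S *m s = s.
Proof.
rewrite patterns_supp => /subsetP sS; apply/matrixP => i j.
rewrite restrict_mxE (ord1 j); case: ifP => // iS.
by apply/esym/eqP; apply: contraFT iS => si; apply: sS; rewrite inE.
Qed.

Lemma restrict_mxC_patterns S s : s \in patterns (~: S) -> restrict_mx S *m s = 0.
Proof.
move=> /restrict_mx_id <-; apply/matrixP => i j.
by rewrite !restrict_mxE mxE inE; case: (i \in S).
Qed.

Lemma restrict_mx_split S v : restrict_mx S *m v + restrict_mx (~: S) *m v = v.
Proof.
by apply/matrixP => i j; rewrite mxE !restrict_mxE inE; case: (i \in S); rewrite ?addr0 ?add0r.
Qed.

End Supports.

Section DefectSet.
Variables (n l : nat) (G0 : 'M['F_2]_(n, l)) (S : {set 'I_n}).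

Definition dual_on : {set 'cV['F_2]_n} := dual G0 :&: patterns S.

Lemma card_restricted_dual_kernel :
  #|[set x : 'cV_n | G0^T *m (restrict_mx S *m x) == 0]| = (#|dual_on| * 2 ^ #|~: S|)%N.
Proof.
rewrite -card_patterns -cardsX.
pose glue (ws : 'cV['F_2]_n * 'cV['F_2]_n) := ws.1 + ws.2.
have restrict_glue w s : w \in patterns S -> s \in patterns (~: S) ->
    restrict_mx S *m glue (w, s) = w.
  by move=> wS sS; rewrite mulmxDr restrict_mx_id // restrict_mxC_patterns // addr0.
have glue_inj : {in setX dual_on (patterns (~: S)) &, injective glue}.
  move=> [w1 s1] [w2 s2] /setXP[/setIP[_ w1S] s1S] /setXP[/setIP[_ w2S] s2S] e.
  have ew : w1 = w2 by rewrite -(restrict_glue w1 s1) // e restrict_glue.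
  by move: e; rewrite /glue /= ew => /addrI ->.
rewrite -(card_in_imset glue_inj); apply: eq_card => x; rewrite inE.
apply/idP/imsetP => [x0|[[w s] /setXP[/setIP[wD wS] sS] ->]].
  exists (restrict_mx S *m x, restrict_mx (~: S) *m x); last by rewrite /glue restrict_mx_split.
  by rewrite in_setX in_setI [_ \in dual _]inE x0 !restrict_mx_patterns.
by rewrite restrict_glue //; rewrite inE in wD.
Qed.

Lemma card_colspan_restrict :
  (#|colspan (restrict_mx S *m G0)| * #|dual_on| = 2 ^ #|S|)%N.
Proof.
have cardSC : #|~: S| = (n - #|S|)%N by rewrite cardsCs setCK card_ord.
have rank_le : (\rank (restrict_mx S *m G0) <= n)%N by apply: rank_leq_row.
have S_le : (#|S| <= n)%N by rewrite -[X in (_ <= X)%N](card_ord n) max_card.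
have := card_restricted_dual_kernel.
rewrite (eq_card (B := [set x | (restrict_mx S *m G0)^T *m x == 0])); last first.
  by move=> x; rewrite !inE trmx_mul tr_restrict_mx mulmxA.
rewrite card_mulmx_eq0 card_Fp // mxrank_tr card_colspan card_Fp // cardSC => ker.
apply/eqP; rewrite -(eqn_pmul2r (expn_gt0 2 (n - #|S|))) -mulnA -ker.
by rewrite -!expnD !subnKC.
Qed.

End DefectSet.

Section Encoding.
Variables (n l k : nat) (G0 : 'M['F_2]_(n, l)) (G1 : 'M['F_2]_(n, k)).
Variables (m : 'cV['F_2]_k) (S : {set 'I_n}).

Lemma encodableE s :
  encodable G0 G1 m S s = (restrict_mx S *m (G1 *m m + s) \in colspan (restrict_mx S *m G0)).
Proof.
apply/existsP/imsetP => [[d /forallP Sd]|[d _ e]].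
  exists d => //; apply/matrixP => i j; rewrite -mulmxA !restrict_mxE (ord1 j).
  by case: ifP => // iS; have /implyP/(_ iS)/eqP-> := Sd i; rewrite mxE.
exists d; apply/forall_inP => i iS; have := congr1 (fun v : 'cV_n => v i ord0) e.
by rewrite -mulmxA !restrict_mxE iS mxE => ->.
Qed.

Lemma card_unencodable :
  (#|[set s in patterns S | ~~ encodable G0 G1 m S s]| +
   #|colspan (restrict_mx S *m G0)| = 2 ^ #|S|)%N.
Proof.
set I := colspan _; set c := restrict_mx S *m (G1 *m m).
have I_patterns v : v \in I -> v - c \in patterns S.
  by move=> /imsetP[d _ ->]; rewrite -mulmxA -mulmxBr restrict_mx_patterns.
have shift_inj : injective (+%R c) by apply: addrI.
have -> : I = [set c + s | s in [set s in patterns S | encodable G0 G1 m S s]].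
  apply/setP => v; apply/idP/imsetP => [vI|[s /setIdP[sS]]].
    exists (v - c); last by rewrite addrC subrK.
    apply/setIdP; split; first exact: I_patterns.
    by rewrite encodableE mulmxDr (restrict_mx_id (I_patterns _ vI)) addrC subrK.
  by rewrite encodableE mulmxDr (restrict_mx_id sS) => ? ->.
rewrite card_imset // -card_patterns -(cardsID [set s | encodable G0 G1 m S s] (patterns S)).
by rewrite addnC; congr (_ + _)%N; apply: eq_card => s; rewrite !inE andbC.
Qed.

End Encoding.

Section Weights.
Variable n : nat.
Implicit Types x y : 'cV['F_2]_n.

Lemma F2_add_neq0 (a b : 'F_2) : (a + b != 0) = (a != 0) (+) (b != 0).
Proof. by move: a b; do 2 case=> [[|[|?]]] ?. Qed.

Lemma addr_eq0_F2 x y : (x + y == 0) = (x == y).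
Proof.
have oppy : - y = y.
  by apply/matrixP => i j; rewrite mxE (oppr_pchar2 (pchar_Fp (isT : prime 2))).
by rewrite -[y in x + y]oppy subr_eq0.
Qed.

Lemma wt_eq0 x : (wt x == 0%N) = (x == 0).
Proof.
rewrite cards_eq0; apply/eqP/eqP => [x0|->]; last by apply/setP => i; rewrite !inE mxE eqxx.
apply/matrixP => i j; rewrite (ord1 j) mxE; apply/eqP.
by move: (in_set0 i); rewrite -x0 inE => /negbFE.
Qed.

Lemma wt_add x y : (wt x + wt y + wt (x + y))%N = (#|supp x :|: supp y|).*2.
Proof.
have -> : wt (x + y) = #|(supp x :|: supp y) :\: (supp x :&: supp y)|.
  by apply: eq_card => i; rewrite !inE mxE F2_add_neq0; do 2 case: (_ != 0).
have IU : supp x :&: supp y \subset supp x :|: supp y.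
  exact: subset_trans (subsetIl _ _) (subsetUl _ _).
have := cardsUI (supp x) (supp y); have := subset_leq_card IU.
by rewrite cardsDS //; change (wt x) with #|supp x|; change (wt y) with #|supp y|; lia.
Qed.

End Weights.

Section MinimumDistance.
Variables (n l : nat) (G0 : 'M['F_2]_(n, l)) (d0 : nat).
Hypothesis min_d0 : is_min_dist G0 d0.

Lemma min_dist_gt0 : (0 < d0)%N.
Proof.
have [[x _ /andP[x0 /eqP <-]] _] := min_d0.
by rewrite lt0n wt_eq0.
Qed.

Lemma dualD x y : x \in dual G0 -> y \in dual G0 -> x + y \in dual G0.
Proof. by rewrite !inE mulmxDr => /eqP-> /eqP->; rewrite addr0. Qed.

(* Two distinct nonzero codewords x, y supported in S would give
   [3 d0 <= wt x + wt y + wt (x + y) = 2 |supp x :|: supp y| <= 2 |S| < 3 d0]. *)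
Lemma card_dual_on_nonzero (S : {set 'I_n}) :
  (#|S| <= d0 + (d0.-1)./2)%N -> (#|dual_on G0 S :\ 0%R| <= 1)%N.
Proof.
move=> S_small; apply/card_le1_eqP => x y.
move=> /setD1P[x0 /setIP[xD xS]] /setD1P[y0 /setIP[yD yS]].
apply/eqP; apply: contraT => xy.
have xy0 : x + y != 0 by rewrite addr_eq0_F2 eq_sym.
have [_ min_wt] := min_d0.
have := min_wt _ xD x0; have := min_wt _ yD y0; have := min_wt _ (dualD xD yD) xy0.
have : (#|supp x :|: supp y| <= #|S|)%N.
  by apply: subset_leq_card; rewrite subUset -!patterns_supp xS yS.
have half_le : ((d0.-1)./2.*2 <= d0.-1)%N.
  by rewrite -[X in (_ <= X)%N]odd_double_half leq_addl.
have := wt_add x y; have := min_dist_gt0; move: S_small half_le; rewrite -!muln2.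
move: (wt x) (wt y) (wt (x + y)) #|_ :|: _| #|S| (d0.-1)./2 => *; lia.
Qed.

End MinimumDistance.

Lemma unencodable_ratio n l k (G0 : 'M['F_2]_(n, l)) (G1 : 'M['F_2]_(n, k))
    (m : 'cV['F_2]_k) (d0 : nat) (S : {set 'I_n}) :
  is_min_dist G0 d0 -> (#|S| <= d0 + (d0.-1)./2)%N ->
  (#|[set s in patterns S | ~~ encodable G0 G1 m S s]|%:R / (2 ^ #|S|)%:R : rat)
  = #|dual_on G0 S :\ 0|%:R / 2.
Proof.
move=> min_d0 S_small.
have zero_dual_on : 0 \in dual_on G0 S.
  by rewrite inE [0 \in dual _]inE mulmx0 eqxx patterns_supp; apply/subsetP => i; rewrite inE mxE eqxx.
have := card_colspan_restrict G0 S; rewrite (cardsD1 0 (dual_on G0 S)) zero_dual_on.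
have := card_dual_on_nonzero min_d0 S_small; have := card_unencodable G0 G1 m S.
set f := #|_|; set w := #|_ :\ 0|.
have := expn_gt0 2 #|S|; move: (2 ^ #|S|)%N => P P_gt0 fc w_le1 cw.
have fP : (f * 2 = w * P)%N.
  by case: w w_le1 cw => [|[|//]] _ cP; lia.
by apply/eqP; rewrite eqr_div ?pnatr_eq0 -?lt0n // -!natrM fP.
Qed.

Lemma sum_card_dual_on_nonzero n l (G0 : 'M['F_2]_(n, l)) (d0 u : nat) :
  is_min_dist G0 d0 -> (u <= n)%N ->
  (\sum_(S : {set 'I_n} | #|S| == u) #|dual_on G0 S :\ 0%R|)%N =
  (\sum_(d0 <= w < u.+1) Bw G0 w * 'C(n - w, u - w))%N.
Proof.
move=> min_d0 u_le; have [_ min_wt] := min_d0.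
pose c (x : 'cV['F_2]_n) := if (wt x <= u)%N then 'C(n - wt x, u - wt x) else 0%N.
have -> : (\sum_(S : {set 'I_n} | #|S| == u) #|dual_on G0 S :\ 0%R|)%N =
          (\sum_(x in dual G0 :\ 0%R) c x)%N.
  have card_dual_on S : #|dual_on G0 S :\ 0%R| = (\sum_(x in dual G0 :\ 0%R) (x \in patterns S))%N.
    by rewrite -card_setIdE; apply: eq_card => x; rewrite /dual_on !inE andbA.
  rewrite (eq_bigr _ (fun S _ => card_dual_on S)) exchange_big /=.
  apply: eq_bigr => x _; have := @card_draws_supset _ (supp x) u; rewrite card_ord => /(_ u_le).
  rewrite /c -/(wt x) => <-; rewrite -card_setIdE.
  by apply: eq_card => S; rewrite !inE -patterns_supp inE.
have -> : (\sum_(d0 <= w < u.+1) Bw G0 w * 'C(n - w, u - w))%N =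
          (\sum_(x in dual G0) if (d0 <= wt x)%N then c x else 0)%N.
  under eq_bigr => w _ do rewrite /Bw card_setIdE big_distrl /=.
  rewrite exchange_big /=; apply: eq_bigr => x _.
  rewrite (eq_bigr (fun w => if w == wt x then 'C(n - w, u - w) else 0%N)) => [|w _]; last first.
    by rewrite eq_sym; case: (_ == _); rewrite ?mul1n.
  rewrite -big_mkcond big_nat_pred1 ltnS /c.
  by case: (d0 <= wt x)%N; case: (wt x <= u)%N.
rewrite [RHS](bigD1 0%R) /=; last by rewrite inE mulmx0.
rewrite {1}/wt (eq_card0 (A := [set i | _ != 0])) => [|i]; last by rewrite !inE mxE eqxx.
rewrite leqNgt (min_dist_gt0 min_d0) add0n.
by apply: eq_big => [x|x /setD1P[x0 xD]]; [rewrite in_setD1 andbC | rewrite min_wt].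
Qed.

Unset Implicit Arguments.

Theorem lemma2 (n l k : nat) (G0 : 'M['F_2]_(n, l)) (G1 : 'M['F_2]_(n, k))
  (m : 'cV['F_2]_k) (d0 : nat) (Hd0 : is_min_dist G0 d0) (u : nat)
  (Hu1 : (1 <= u)%N) (Hu2 : (u <= d0 + (d0.-1)./2)%N) (Hun : (u <= n)%N) :
  fail_prob G0 G1 m u =
  (1 / 2 : rat) *
    ((\sum_(d0 <= w < u.+1) Bw G0 w * 'C(n - w, u - w))%N%:R / ('C(n, u))%:R).
Proof.
rewrite /fail_prob (eq_bigr (fun S => #|dual_on G0 S :\ 0|%:R / 2)) => [|S /eqP S_u].
  by rewrite -mulr_suml -natr_sum (sum_card_dual_on_nonzero Hd0 Hun) mul1r mulrCA mulrA.
by rewrite -S_u (unencodable_ratio _ _ Hd0) // S_u.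
Qed.
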